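(* Let $\Gamma$ be a finite simplicial graph satisfying (B1): for all non-adjacent $u,v\in V(\Gamma)$, $u\sim v$. Let $v,w\in V(\Gamma)$ be distinct, non-adjacent vertices, and let $c_1=c_{w,v}$ (the partial conjugation of the single vertex $v$ by $w$). Then there exist $t,c_2\in\mathrm{Aut}(A_\Gamma)$ such that $c_1^m=[t^m,c_2^{-1}]$ for all $m\ge 0$. In particular, $c_1^m\in\mathrm{S}\mathcal{I}A'_\Gamma(m)$ for all $m\ge 0$.
   Context: $n=|V(\Gamma)|$. For $v\in V(\Gamma)$, $\mathrm{lk}(v)$ is the set of vertices adjacent to $v$ and $\mathrm{st}(v)=\mathrm{lk}(v)\cup\{v\}$; $v\le w$ iff $\mathrm{lk}(v)\subset\mathrm{st}(w)$; $v\sim w$ iff $v\le w$ and $w\le v$. $A_\Gamma=\langle V(\Gamma)\mid [u,v]=1 \text{ whenever } u,v \text{ adjacent}\rangle$. Under (B1), $\Gamma-\mathrm{st}(w)$ is totally disconnected, and $c_{w,v}$ denotes the automorphism $v\mapsto w^{-1}vw$ fixing all other vertices. Commutator convention: $[a,b]=a^{-1}b^{-1}ab$. Transvection: for distinct $v,w$ with $v\le w$, $t_{vw}$ maps $v\mapsto vw$, fixing other vertices; partial conjugation $c_{v,Y}$ ($Y$ a component of $\Gamma-\mathrm{st}(v)$) maps $x\mapsto v^{-1}xv$ for $x\in Y$, fixing others. $\mathrm{SAut}^0(A_\Gamma)$ is generated by transvections and partial conjugations; $\mathrm{S}\mathcal{I}A_\Gamma(m)$ is the kernel of $\mathrm{SAut}^0(A_\Gamma)\to\mathrm{SL}(n,\mathbb{Z})\to\mathrm{SL}(n,\mathbb{Z}/m\mathbb{Z})$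 (action on $H_1(A_\Gamma;\mathbb Z)=\mathbb Z^n$, then reduction mod $m$), and $\mathrm{S}\mathcal{I}A'_\Gamma(m)$ is its commutator subgroup. *)

(* Right-angled Artin groups A_Gamma given by words modulo the
   congruence generated by free cancellation and the commutation relations;
   endomorphisms of A_Gamma represented by the images of the generators. *)
From mathcomp Require Import all_boot all_order all_algebra.
Set Implicit Arguments. Unset Strict Implicit. Unset Printing Implicit Defensive.
Import GRing.Theory Num.Theory.

Section RAAG.
Variable V : finType.
Variable e : rel V.   (* adjacency of the simplicial graph Gamma *)

Definition simplicial := symmetric e /\ irreflexive e.

Definition lk (v : V) : {set V} := [set u | e v u].
Definition st (v : V) : {set V} := v |: lk v.
Definition vle (v w : V) : bool := lk v \subset st w.
Definition vsim (v w : V) : bool := vle v w && vle w v.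
Definition B1 := forall u v : V, ~~ e u v -> vsim u v.

(* words in the generators; (x,false) = x, (x,true) = x^-1 *)
Definition word := seq (V * bool).
Definition winv (w : word) : word := rev (map (fun p => (p.1, ~~ p.2)) w).

Inductive Req : word -> word -> Prop :=
| Req_refl w : Req w w
| Req_sym w1 w2 : Req w1 w2 -> Req w2 w1
| Req_trans w1 w2 w3 : Req w1 w2 -> Req w2 w3 -> Req w1 w3
| Req_free (a b : word) x s : Req (a ++ (x, s) :: (x, ~~ s) :: b) (a ++ b)
| Req_comm (a b : word) x y : e x y ->
    Req (a ++ (x, false) :: (y, false) :: b) (a ++ (y, false) :: (x, false) :: b).

Definition subst (phi : V -> word) (w : word) : word :=
  flatten (map (fun p => if p.2 then winv (phi p.1) else phi p.1) w).

Definition is_endo (phi : V -> word) :=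
  forall u v, e u v -> Req (phi u ++ phi v) (phi v ++ phi u).

Definition idm : V -> word := fun x => [:: (x, false)].
(* composition: (acomp phi psi)(x) = phi (psi x) *)
Definition acomp (phi psi : V -> word) : V -> word := fun x => subst phi (psi x).
Definition apow (phi : V -> word) (m : nat) : V -> word := iter m (acomp phi) idm.
Definition aeq (phi psi : V -> word) := forall x, Req (phi x) (psi x).

Definition inverse_pair (phi psi : V -> word) :=
  [/\ is_endo phi, is_endo psi, aeq (acomp phi psi) idm & aeq (acomp psi phi) idm].
Definition is_aut (phi : V -> word) := exists psi, inverse_pair phi psi.

(* c_{w,v} : v |-> w^-1 v w, other generators fixed *)
Definition cwv (w v : V) : V -> word :=
  fun x => if x == v then [:: (w, true); (v, false); (w, false)] else [:: (x, false)].

(* transvection t_{xy} : x |-> x y, and its inverse x |-> x y^-1 *)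
Definition transv (x y : V) (s : bool) : V -> word :=
  fun z => if z == x then [:: (x, false); (y, s)] else [:: (z, false)].

(* component of Gamma - st(x) containing y (for y not in st(x)) *)
Definition outside_rel (x : V) : rel V :=
  fun a b => [&& e a b, a \notin st x & b \notin st x].
Definition in_comp (x y z : V) : bool := connect (outside_rel x) y z.

(* partial conjugation c_{x,Y} : z |-> x^-1 z x for z in Y (s = false),
   and its inverse z |-> x z x^-1 (s = true) *)
Definition pconj (x y : V) (s : bool) : V -> word :=
  fun z => if in_comp x y z then [:: (x, ~~ s); (z, false); (x, s)]
           else [:: (z, false)].

(* generators of SAut^0(A_Gamma) and their inverses *)
Inductive sgen : (V -> word) -> Prop :=
| sgen_t x y s : x != y -> vle x y -> sgen (transv x y s)
| sgen_c x y s : y \notin st x -> sgen (pconj x y s).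

Inductive gen_prod : (V -> word) -> Prop :=
| gp_id : gen_prod idm
| gp_mul g a : sgen g -> gen_prod a -> gen_prod (acomp g a).

Definition in_SAut0 (phi : V -> word) := exists a, gen_prod a /\ aeq phi a.

(* exponent sum of generator y in a word: entries of the action on H_1 = Z^n *)
Definition expsum (w : word) (y : V) : int :=
  (count (pred1 (y, false)) w)%:Z - (count (pred1 (y, true)) w)%:Z.

(* S IA_Gamma(m): kernel of SAut^0 -> SL(n,Z) -> SL(n, Z/mZ) *)
Definition in_SIA (m : nat) (phi : V -> word) :=
  in_SAut0 phi /\
  forall x y : V, (expsum (phi x) y = (x == y)%:Z %[mod m%:Z])%Z.

Definition is_SIA_commutator (m : nat) (c : V -> word) :=
  exists a ai b bi, [/\ in_SIA m a, in_SIA m b, inverse_pair a ai,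
    inverse_pair b bi & aeq c (acomp ai (acomp bi (acomp a b)))].

Inductive comm_prod (m : nat) : (V -> word) -> Prop :=
| cp_id : comm_prod m idm
| cp_mul c a : is_SIA_commutator m c -> comm_prod m a -> comm_prod m (acomp c a).

(* S IA'_Gamma(m): the commutator subgroup of S IA_Gamma(m) *)
Definition in_SIA' (m : nat) (phi : V -> word) :=
  exists a, comm_prod m a /\ aeq phi a.

End RAAG.

From mathcomp Require Import all_boot all_order all_algebra zify.
Set Implicit Arguments. Unset Strict Implicit. Unset Printing Implicit Defensive.
Import GRing.Theory.

(* Let t = t_{vw}^{-1} : v |-> v w^-1 and c_2 = c_{v,{w}} : w |-> v^-1 w v.  By (B1)
   and the non-adjacency of v and w we get lk w = lk v, so {w} is a component of
   Gamma - st(v) and c_2 is a partial conjugation.  On generators, t^-m c_2 t^m c_2^-1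
   sends v to w^-m v w^m = c_1^m(v), and at w it reduces to c_2 c_2^-1 because t^m
   fixes v w v^-1 in A_Gamma.  Since t^m = id mod m and c_2 acts trivially on
   homology, both lie in S IA(m), hence c_1^m lies in S IA'(m). *)

Lemma nseqSr (T : Type) m (x : T) : nseq m.+1 x = nseq m x ++ [:: x].
Proof. by rewrite -[[:: x]]/(nseq 1 x) -nseqD addn1. Qed.

Section WordCongruence.
Variable V : finType.
Variable e : rel V.
Local Notation R := (Req e).
Implicit Types (a b c : word V) (phi psi : V -> word V).

Lemma Req_catl c a b : R a b -> R (c ++ a) (c ++ b).
Proof.
elim=> {a b} [a|a b _ IH|a b d _ IH1 _ IH2|a b x s|a b x y exy].
- exact: Req_refl.
- exact: Req_sym.
- exact: Req_trans IH1 IH2.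
- by rewrite !catA; apply: Req_free.
- by rewrite !catA; apply: Req_comm.
Qed.

Lemma Req_catr c a b : R a b -> R (a ++ c) (b ++ c).
Proof.
elim=> {a b} [a|a b _ IH|a b d _ IH1 _ IH2|a b x s|a b x y exy].
- exact: Req_refl.
- exact: Req_sym.
- exact: Req_trans IH1 IH2.
- by rewrite -!catA; apply: Req_free.
- by rewrite -!catA; apply: Req_comm.
Qed.

Lemma Req_cancel x s b : R [:: (x, s), (x, ~~ s) & b] b.
Proof. exact: (Req_free e [::] b x s). Qed.

Lemma winv_cons p a : winv (p :: a) = winv a ++ [:: (p.1, ~~ p.2)].
Proof. by rewrite /winv /= rev_cons -cats1. Qed.

Lemma winvK : involutive (@winv V).
Proof.
move=> a; rewrite /winv map_rev revK -map_comp map_id_in // => -[x s] _ /=.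
by rewrite negbK.
Qed.

Lemma winv_nseq m (p : V * bool) : winv (nseq m p) = nseq m (p.1, ~~ p.2).
Proof. by rewrite /winv map_nseq rev_nseq. Qed.

Lemma Req_nseq_conj x m :
  R (nseq m (x, true) ++ (x, false) :: nseq m (x, false)) [:: (x, false)].
Proof.
elim: m => [|m IH]; first exact: Req_refl.
rewrite [nseq m.+1 (x, false)]nseqSr /= -[(x, false) :: _ ++ _]cat_cons catA.
apply: Req_trans (Req_catl [:: (x, true)] (Req_catr [:: (x, false)] IH)) _.
exact: Req_cancel.
Qed.

Lemma Req_cat_winv a : R (a ++ winv a) [::].
Proof.
elim: a => [|[x s] a IH]; first exact: Req_refl.
rewrite winv_cons /= catA.
apply: Req_trans (Req_catl [:: (x, s)] (Req_catr _ IH)) _.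
exact: Req_cancel.
Qed.

Lemma Req_winv_cat a : R (winv a ++ a) [::].
Proof. by have := Req_cat_winv (winv a); rewrite winvK. Qed.

Lemma subst_cat phi a b : subst phi (a ++ b) = subst phi a ++ subst phi b.
Proof. by rewrite /subst map_cat flatten_cat. Qed.

Lemma subst_seq1 phi (p : V * bool) :
  subst phi [:: p] = if p.2 then winv (phi p.1) else phi p.1.
Proof. by rewrite /subst /= cats0. Qed.

Lemma subst_cons phi p a : subst phi (p :: a) = subst phi [:: p] ++ subst phi a.
Proof. by rewrite -cat1s subst_cat. Qed.

Lemma eq_subst phi psi : phi =1 psi -> subst phi =1 subst psi.
Proof. by move=> eq_phi a; congr flatten; apply: eq_map => -[x []] /=; rewrite eq_phi. Qed.

Lemma subst_nseq_fixed phi x s m :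
  phi x = [:: (x, false)] -> subst phi (nseq m (x, s)) = nseq m (x, s).
Proof.
move=> phix; elim: m => [|m IH] //=.
by rewrite subst_cons IH subst_seq1 /= phix; case: (s).
Qed.

Lemma Req_subst phi a b : is_endo e phi -> R a b -> R (subst phi a) (subst phi b).
Proof.
move=> endo_phi.
elim=> {a b} [a|a b _ IH|a b d _ IH1 _ IH2|a b x s|a b x y exy].
- exact: Req_refl.
- exact: Req_sym.
- exact: Req_trans IH1 IH2.
- rewrite !subst_cat; apply: Req_catl; rewrite /subst /= catA.
  apply: Req_trans (Req_catr _ (_ : R _ [::])) (Req_refl _ _).
  by case: s; [apply: Req_winv_cat | apply: Req_cat_winv].
- rewrite !subst_cat; apply: Req_catl; rewrite /subst /= !catA.
  exact/Req_catr/endo_phi.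
Qed.

Lemma is_endo_idm : is_endo e (@idm V).
Proof. by move=> x y exy; apply: (Req_comm [::] [::] exy). Qed.

Lemma is_endo_acomp phi psi :
  is_endo e phi -> is_endo e psi -> is_endo e (acomp phi psi).
Proof.
move=> endo_phi endo_psi x y exy.
by rewrite /acomp -!subst_cat; apply/Req_subst/endo_psi.
Qed.

Lemma is_endo_apow phi m : is_endo e phi -> is_endo e (apow phi m).
Proof.
by move=> endo_phi; elim: m => [|m IH]; [apply: is_endo_idm | apply: is_endo_acomp].
Qed.

Lemma apowS phi m x : apow phi m.+1 x = subst phi (apow phi m x).
Proof. by []. Qed.

Lemma apow1 phi : apow phi 1 =1 phi.
Proof. by move=> x; rewrite apowS subst_seq1. Qed.

Lemma apow_fixed phi m x : phi x = [:: (x, false)] -> apow phi m x = [:: (x, false)].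
Proof. by move=> phix; elim: m => [|m IH] //; rewrite apowS IH subst_seq1. Qed.

Lemma acomp_idm phi : acomp phi (@idm V) =1 phi.
Proof. exact: apow1. Qed.

Lemma inverse_pair_negb (f : bool -> V -> word V) :
  (forall s, is_endo e (f s)) -> (forall s, aeq e (acomp (f s) (f (~~ s))) (@idm V)) ->
  forall s, inverse_pair e (f s) (f (~~ s)).
Proof. by move=> endo_f inv_f s; split; rewrite // -{2}[s]negbK. Qed.

Section Simplicial.
Hypothesis simple_e : simplicial e.

Lemma Req_swap x y s t : e x y -> R [:: (x, s); (y, t)] [:: (y, t); (x, s)].
Proof.
have [sym_e _] := simple_e.
(* Req_comm only swaps positive letters: u^-1 z = u^-1 (z u) u^-1 = u^-1 (u z) u^-1 = z u^-1. *)
have swap_inv u z : e u z -> R [:: (u, true); (z, false)] [:: (z, false); (u, true)].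
  move=> euz.
  apply: Req_trans (Req_sym (Req_free e [:: (u, true); (z, false)] [::] u false)) _.
  apply: Req_trans (Req_sym (Req_comm [:: (u, true)] [:: (u, true)] euz)) _.
  exact: Req_cancel.
move=> exy; case: s; case: t.
- apply: Req_trans (Req_sym (Req_cancel y true _)) _.
  have := Req_catl [:: (y, true)] (Req_catr [:: (y, true)] (Req_sym (swap_inv _ _ exy))).
  move/Req_trans; apply.
  exact: (Req_free e [:: (y, true); (x, true)] [::] y false).
- exact: swap_inv.
- by apply/Req_sym/swap_inv; rewrite sym_e.
- exact: (Req_comm [::] [::] exy).
Qed.

Lemma Req_commute_letter x s a :
  all (fun p => e x p.1) a -> R ((x, s) :: a) (a ++ [:: (x, s)]).
Proof.
elim: a => [|[y t] a IH] /=; first by move=> _; apply: Req_refl.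
case/andP=> exy /IH {}IH.
apply: Req_trans (Req_catr a (Req_swap s t exy)) _.
exact: (Req_catl [:: (y, t)] IH).
Qed.

Lemma is_endo_supported x0 phi :
  (forall x, x != x0 -> phi x = [:: (x, false)]) ->
  (forall x, e x0 x -> all (fun p => e x p.1) (phi x0)) -> is_endo e phi.
Proof.
have [sym_e irr_e] := simple_e.
move=> phi_id phi_x0 x y exy.
case: (eqVneq x x0) => [xx0|xx0]; case: (eqVneq y x0) => [yx0|yx0]; subst.
- by rewrite irr_e in exy.
- by rewrite (phi_id y yx0); apply/Req_sym/Req_commute_letter/phi_x0.
- by rewrite (phi_id x xx0); apply/Req_commute_letter/phi_x0; rewrite sym_e.
- by rewrite (phi_id x xx0) (phi_id y yx0); apply: (Req_comm [::] [::] exy).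
Qed.

End Simplicial.

Lemma gen_prod_apow g m : sgen e g -> gen_prod e (apow g m).
Proof. by move=> gen_g; elim: m => [|m IH]; [apply: gp_id | apply: gp_mul]. Qed.

Lemma expsum_idm x y : expsum (@idm V x) y = Posz (x == y).
Proof. by rewrite /expsum /= !xpair_eqE eqxx /= andbT andbF !addn0 subr0. Qed.

Lemma commutator_in_SIA' m phi : is_SIA_commutator e m phi -> in_SIA' e m phi.
Proof.
move=> comm_phi; exists (acomp phi (@idm V)); split; first by apply: cp_mul; [|apply: cp_id].
by move=> x; rewrite acomp_idm; apply: Req_refl.
Qed.

End WordCongruence.

Section ConjugationAsCommutator.
Variables (V : finType) (e : rel V) (v w : V).
Hypothesis simple_e : simplicial e.
Hypothesis B1_e : B1 e.
Hypothesis neq_vw : v != w.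
Hypothesis nadj_vw : ~~ e v w.
Local Notation R := (Req e).

Lemma same_link z : e v z = e w z.
Proof.
have [sym_e _] := simple_e.
case/andP: (B1_e nadj_vw) => /subsetP lkv_stw /subsetP lkw_stv.
apply/idP/idP => [evz | ewz].
- have: z \in st e w by apply: lkv_stw; rewrite /lk inE.
  rewrite /st /lk !inE => /orP[/eqP zw|//].
  by move: nadj_vw; rewrite -zw evz.
- have: z \in st e v by apply: lkw_stv; rewrite /lk inE.
  rewrite /st /lk !inE => /orP[/eqP zv|//].
  by move: nadj_vw; rewrite sym_e -zv ewz.
Qed.

Lemma in_comp_vw z : in_comp e v w z = (z == w).
Proof.
apply/idP/eqP => [|->]; last exact: connect0.
case/connectP=> [[|y p]] /=; first by move=> _ ->.
case/andP=> /and3P[ewy _ y_notin_stv] _ _.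
by rewrite /st /lk !inE same_link ewy orbT in y_notin_stv.
Qed.

Lemma transv_v s : transv v w s v = [:: (v, false); (w, s)].
Proof. by rewrite /transv eqxx. Qed.

Lemma transv_id s z : z != v -> transv v w s z = [:: (z, false)].
Proof. by move=> /negbTE zv; rewrite /transv zv. Qed.

Lemma pconj_w s : pconj e v w s w = [:: (v, ~~ s); (w, false); (v, s)].
Proof. by rewrite /pconj in_comp_vw eqxx. Qed.

Lemma pconj_id s z : z != w -> pconj e v w s z = [:: (z, false)].
Proof. by move=> /negbTE zw; rewrite /pconj in_comp_vw zw. Qed.

Lemma cwv_id z : z != v -> cwv w v z = [:: (z, false)].
Proof. by move=> /negbTE zv; rewrite /cwv zv. Qed.

Lemma apow_transv_v s m : apow (transv v w s) m v = (v, false) :: nseq m (w, s).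
Proof.
elim: m => [|m IH] //.
rewrite apowS IH subst_cons subst_nseq_fixed ?transv_id 1?eq_sym //.
by rewrite subst_seq1 /= transv_v.
Qed.

Lemma apow_cwv_v m :
  apow (cwv w v) m v = nseq m (w, true) ++ (v, false) :: nseq m (w, false).
Proof.
elim: m => [|m IH] //.
rewrite apowS IH subst_cat subst_cons !subst_nseq_fixed ?cwv_id 1?eq_sym //.
by rewrite subst_seq1 /= /cwv eqxx /= -[(w, true) :: _]cat1s catA -nseqSr.
Qed.

Lemma is_endo_transv s : is_endo e (transv v w s).
Proof.
have [sym_e _] := simple_e.
apply: (is_endo_supported simple_e (x0 := v)) => [z|z evz]; first exact: transv_id.
by rewrite transv_v /= !(sym_e z) -same_link evz.
Qed.

Lemma is_endo_pconj s : is_endo e (pconj e v w s).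
Proof.
have [sym_e _] := simple_e.
apply: (is_endo_supported simple_e (x0 := w)) => [z|z ewz]; first exact: pconj_id.
by rewrite pconj_w /= !(sym_e z) same_link ewz.
Qed.

Lemma apow_transv_inverse s m :
  aeq e (acomp (apow (transv v w s) m) (apow (transv v w (~~ s)) m)) (@idm V).
Proof.
move=> x; rewrite /acomp; case: (eqVneq x v) => [->|xv].
  rewrite apow_transv_v subst_cons subst_seq1 /= apow_transv_v.
  rewrite subst_nseq_fixed; last by rewrite apow_fixed // transv_id 1?eq_sym.
  apply: (Req_catl [:: (v, false)]).
  by have := Req_cat_winv e (nseq m (w, s)); rewrite winv_nseq.
rewrite !(apow_fixed _ (transv_id _ xv)) subst_seq1 /= apow_fixed ?transv_id //.
exact: Req_refl.
Qed.

Lemma transv_inverse s : aeq e (acomp (transv v w s) (transv v w (~~ s))) (@idm V).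
Proof.
move=> x; have := apow_transv_inverse s 1 x.
by rewrite /acomp (eq_subst (apow1 _)) apow1.
Qed.

Lemma pconj_inverse s : aeq e (acomp (pconj e v w s) (pconj e v w (~~ s))) (@idm V).
Proof.
move=> x; rewrite /acomp; case: (eqVneq x w) => [->|xw].
  rewrite pconj_w /subst /= cats0 pconj_id // pconj_w.
  case: s; rewrite /winv /=; apply: Req_trans (Req_cancel e v _ _) _;
    exact: (Req_catl [:: (w, false)] (Req_cancel e v _ [::])).
rewrite pconj_id // subst_seq1 /= pconj_id //; exact: Req_refl.
Qed.

Lemma inverse_pair_transv s : inverse_pair e (transv v w s) (transv v w (~~ s)).
Proof. exact: (inverse_pair_negb (f := transv v w) is_endo_transv transv_inverse). Qed.

Lemma inverse_pair_apow_transv s m :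
  inverse_pair e (apow (transv v w s) m) (apow (transv v w (~~ s)) m).
Proof.
apply: (inverse_pair_negb (f := fun s => apow (transv v w s) m)) => [{}s|{}s].
  exact/is_endo_apow/is_endo_transv.
exact: apow_transv_inverse.
Qed.

Lemma inverse_pair_pconj s : inverse_pair e (pconj e v w s) (pconj e v w (~~ s)).
Proof. exact: (inverse_pair_negb (f := pconj e v w) is_endo_pconj pconj_inverse). Qed.

Lemma Req_pconj_nseq m :
  R ((v, false) :: subst (pconj e v w false) (nseq m (w, true)))
    (nseq m (w, true) ++ [:: (v, false)]).
Proof.
elim: m => [|m IH]; first exact: Req_refl.
rewrite [nseq m.+1 _]/= subst_cons subst_seq1 /= pconj_w winv_cons /=.
rewrite /winv /= -/(winv _).
exact: Req_trans (Req_cancel e v false _) (Req_catl [:: (w, true)] IH).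
Qed.

Lemma apow_transv_conj_w m :
  R (subst (apow (transv v w true) m) (pconj e v w true w)) (pconj e v w true w).
Proof.
rewrite pconj_w /subst /= cats0.
rewrite apow_transv_v apow_fixed ?transv_id 1?eq_sym // winv_cons winv_nseq /=.
rewrite -[(w, false) :: _ ++ _]cat_cons catA.
exact: (Req_catl [:: (v, false)] (Req_catr [:: (v, true)] (Req_nseq_conj e w m))).
Qed.

Lemma cwv_pow_commutator m :
  aeq e (apow (cwv w v) m) (acomp (apow (transv v w false) m)
    (acomp (pconj e v w false) (acomp (apow (transv v w true) m) (pconj e v w true)))).
Proof.
have endo_ti := is_endo_apow m (is_endo_transv false).
have endo_c2 := is_endo_pconj false.
have ti_w : apow (transv v w false) m w = [:: (w, false)].
  by rewrite apow_fixed // transv_id // eq_sym.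
move=> x; rewrite /acomp; apply: Req_sym.
case: (eqVneq x v) => [->|xv].
  rewrite pconj_id // subst_seq1 /= apow_transv_v subst_cons subst_seq1 /= pconj_id //.
  apply: Req_trans (Req_subst endo_ti (Req_pconj_nseq m)) _.
  rewrite subst_cat subst_nseq_fixed // subst_seq1 /= apow_transv_v apow_cwv_v.
  exact: Req_refl.
case: (eqVneq x w) => [->|xw].
  apply: Req_trans (Req_subst endo_ti (Req_subst endo_c2 (apow_transv_conj_w m))) _.
  apply: Req_trans (Req_subst endo_ti (pconj_inverse false w)) _.
  rewrite subst_seq1 /= ti_w apow_fixed ?cwv_id 1?eq_sym //; exact: Req_refl.
rewrite pconj_id // subst_seq1 /= apow_fixed ?transv_id // subst_seq1 /= pconj_id //.
rewrite subst_seq1 /= !apow_fixed ?transv_id ?cwv_id //; exact: Req_refl.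
Qed.

Lemma in_SIA_apow_transv m : in_SIA e m (apow (transv v w true) m).
Proof.
split.
  exists (apow (transv v w true) m); split; last by move=> x; apply: Req_refl.
  apply/gen_prod_apow/sgen_t => //; by case/andP: (B1_e nadj_vw).
move=> x y; case: (eqVneq x v) => [->|xv]; last first.
  by rewrite apow_fixed ?transv_id // expsum_idm.
rewrite apow_transv_v /expsum /= !count_nseq /= !xpair_eqE /= andbT !andbF /= addn0 add0n.
by rewrite PoszM addrC -mulNr modzMDl.
Qed.

Lemma in_SIA_pconj m s : in_SIA e m (pconj e v w s).
Proof.
split.
  exists (apow (pconj e v w s) 1); split; last by move=> x; rewrite apow1; apply: Req_refl.
  by apply/gen_prod_apow/sgen_c; rewrite /st /lk !inE negb_or eq_sym neq_vw.
move=> x y; case: (eqVneq x w) => [->|xw]; last by rewrite pconj_id // expsum_idm.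
rewrite pconj_w /expsum /=.
by case: s; rewrite !xpair_eqE /= ?andbT ?andbF /= !addn0 ?add0n; congr (_ %% _)%Z; lia.
Qed.

Lemma cwv_pow_SIA_commutator m : is_SIA_commutator e m (apow (cwv w v) m).
Proof.
exists (apow (transv v w true) m), (apow (transv v w false) m),
  (pconj e v w true), (pconj e v w false); split.
- exact: in_SIA_apow_transv.
- exact: in_SIA_pconj.
- exact: inverse_pair_apow_transv true m.
- exact: inverse_pair_pconj true.
- exact: cwv_pow_commutator.
Qed.

End ConjugationAsCommutator.

Theorem lemma3p6 (V : finType) (e : rel V) (v w : V) :
  simplicial e -> B1 e -> v != w -> ~~ e v w ->
  (exists t ti c2 c2i : V -> word V,
     [/\ inverse_pair e t ti, inverse_pair e c2 c2i &
       forall m : nat,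
         (* c_1^m = [t^m, c_2^-1] = t^-m c_2 t^m c_2^-1 *)
         aeq e (apow (cwv w v) m)
               (acomp (apow ti m) (acomp c2 (acomp (apow t m) c2i)))])
  /\ (forall m : nat, in_SIA' e m (apow (cwv w v) m)).
Proof.
move=> simple_e B1_e neq_vw nadj_vw; split=> [|m].
  exists (transv v w true), (transv v w false), (pconj e v w false), (pconj e v w true).
  split=> [||m].
  - exact: (inverse_pair_transv simple_e B1_e neq_vw nadj_vw true).
  - exact: (inverse_pair_pconj simple_e B1_e neq_vw nadj_vw false).
  - exact: cwv_pow_commutator.
exact/commutator_in_SIA'/cwv_pow_SIA_commutator.
Qed.
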